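(* Let $G=(V,E)$ be a finite simple graph whose vertices operate independently, vertex $v$ with probability $p_v$, and let $q_v=1-p_v$, $\mathbf{p}=(p_v)_{v\in V}\in[0,1]^V$. Then \[ \operatorname{DRel}(G,\mathbf{p})=\sum_{J\subseteq V}(-1)^{|J|}\prod_{v\in N_G[J]}q_v. \] Moreover, if $G$ has no isolated vertices, then for any linear ordering of $V$ and any set $\mathscr{X}$ of broken neighbourhoods of $G$, \[ \operatorname{DRel}(G,\mathbf{p})=\sum_{\substack{J\subseteq V\\ J\not\supseteq X\ \forall X\in\mathscr{X}}}(-1)^{|J|}\prod_{v\in N_G[J]}q_v. \]
   Context: $\operatorname{DRel}(G,\mathbf{p})$ is the probability that the set of operating vertices is a dominating set of $G$ (every vertex not in the set is adjacent to a vertex in it); edges never fail. $N_G[J]$ is the closed neighbourhood of $J$ (vertices in $J$ or adjacent to a vertex of $J$), $N_G[v]=N_G[\{v\}]$. Given a linear ordering of $V$, a broken neighbourhood of $G$ is a set $N_G[v]\setminus\{v\}$ for a vertex $v$ with $v=\max N_G[v]$. *)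

From mathcomp Require Import all_boot all_order all_algebra.
Set Implicit Arguments. Unset Strict Implicit. Unset Printing Implicit Defensive.
Import Order.TTheory GRing.Theory Num.Theory.
Local Open Scope ring_scope.

Definition simple_graph (T : finType) (e : rel T) : Prop :=
  symmetric e /\ irreflexive e.

Definition cnbh (T : finType) (e : rel T) (J : {set T}) : {set T} :=
  [set x | (x \in J) || [exists y in J, e y x]].

Definition cnbh1 (T : finType) (e : rel T) (v : T) : {set T} := cnbh e [set v].

Definition dominating (T : finType) (e : rel T) (S : {set T}) : bool :=
  [forall x, (x \notin S) ==> [exists y in S, e x y]].

Definition DRel (R : numDomainType) (T : finType) (e : rel T) (p : T -> R) : R :=
  \sum_(S : {set T} | dominating e S)
     (\prod_(v in S) p v) * (\prod_(v in ~: S) (1 - p v)).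

Definition no_isolated (T : finType) (e : rel T) : Prop :=
  forall v : T, exists u : T, e v u.

Definition strict_linear_order (T : finType) (lt : rel T) : Prop :=
  irreflexive lt /\ transitive lt /\ (forall x y, x != y -> lt x y || lt y x).

Definition is_max_of (T : finType) (lt : rel T) (v : T) (A : {set T}) : bool :=
  (v \in A) && [forall u in A, (u == v) || lt u v].

Definition broken_nbh (T : finType) (e : rel T) (lt : rel T) (X : {set T}) : Prop :=
  exists v : T, is_max_of lt v (cnbh1 e v) /\ X = cnbh1 e v :\ v.

From mathcomp Require Import all_boot all_order all_algebra.
Import Order.TTheory GRing.Theory Num.Theory.
Local Open Scope ring_scope.

(* Expanding every product over N[J] as a sum over
   vertex configurations S, the right-hand side becomes the sum over S of the
   weight of S times the sum of (-1)^|J| over the sets J with N[J] disjoint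
   from S.  These J are exactly the subsets of the set of vertices that are
   neither in S nor dominated by S; the alternating sum over them is 1 if that
   set is empty, i.e. if S is dominating, and 0 otherwise.

   For the second identity, remove the broken neighbourhoods N[v] \ {v} one at
   a time, always the one whose vertex v is largest.  Then v lies in no other
   remaining broken neighbourhood, and on the sets J containing N[v] \ {v} the
   toggle J <-> J + v preserves N[J] (v has a neighbour in J) and the other
   constraints, while it flips the sign: these terms cancel. *)

Section SignReversingToggle.
Variables (R : zmodType) (T : finType).

Lemma sum_toggle_eq0 (P : pred {set T}) (f : {set T} -> R) (v : T) :
  (forall J : {set T}, v \notin J -> P (v |: J) = P J) ->
  (forall J : {set T}, v \notin J -> P J -> f (v |: J) = - f J) ->
  \sum_(J | P J) f J = 0.
Proof.
move=> Pv fv; rewrite (bigID (fun J : {set T} => v \in J)) /=.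
rewrite (reindex_onto (fun J => v |: J) (fun J => J :\ v)) /=; last first.
  by move=> J /andP[_ vJ]; rewrite setD1K.
have setU1K_eq J : ((v |: J) :\ v == J) = (v \notin J).
  by apply/eqP/idP => [<-|/setU1K//]; rewrite setD11.
rewrite (eq_bigl (fun J => P J && (v \notin J))) => [|J]; last first.
  rewrite setU11 andbT setU1K_eq.
  by case vJ: (v \in J); rewrite ?andbF ?andbT ?Pv ?vJ.
by rewrite -big_split /= big1 // => J /andP[PJ vJ]; rewrite fv // addNr.
Qed.

End SignReversingToggle.

Lemma subsetU1_notin (T : finType) (Y J : {set T}) v :
  v \notin Y -> (Y \subset v |: J) = (Y \subset J).
Proof.
move=> vY; apply/idP/idP => /subsetP YJ; apply/subsetP => y yY; last first.
  by rewrite in_setU1 YJ ?orbT.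
by move: (YJ y yY); rewrite in_setU1 => /orP[/eqP yv|//]; rewrite -yv yY in vY.
Qed.

Section ClosedNeighbourhood.
Variables (T : finType) (e : rel T).

Lemma in_cnbh (J : {set T}) x :
  (x \in cnbh e J) = (x \in J) || [exists y in J, e y x].
Proof. by rewrite inE. Qed.

Lemma in_cnbh1 v x : (x \in cnbh1 e v) = (x == v) || e v x.
Proof.
rewrite /cnbh1 in_cnbh in_set1; congr orb.
apply/existsP/idP => [[y /andP[/set1P ->]]//|evx].
by exists v; rewrite in_set1 eqxx.
Qed.

Lemma cnbh0 : cnbh e set0 = set0.
Proof.
by apply/setP => x; rewrite in_cnbh !inE; apply/existsP => -[y]; rewrite inE.
Qed.

Lemma cnbhU1 v (J : {set T}) : cnbh e (v |: J) = cnbh1 e v :|: cnbh e J.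
Proof.
apply/setP => x; rewrite in_setU in_cnbh1 !in_cnbh in_setU1.
apply/idP/idP.
  case/orP => [/orP[->//|->]|/existsP[y /andP[]]]; first by rewrite !orbT.
  rewrite in_setU1 => /orP[/eqP ->|yJ] eyx; first by rewrite eyx orbT.
  by apply/orP; right; apply/orP; right; apply/existsP; exists y; rewrite yJ.
case/orP => [/orP[->//|evx]|/orP[->|/existsP[y /andP[yJ eyx]]]]; rewrite ?orbT //.
  by apply/orP; right; apply/existsP; exists v; rewrite setU11.
by apply/orP; right; apply/existsP; exists y; rewrite in_setU1 yJ orbT.
Qed.

Lemma cnbhU1_broken v (J : {set T}) :
  symmetric e -> irreflexive e -> (exists u, e v u) ->
  cnbh1 e v :\ v \subset J -> cnbh e (v |: J) = cnbh e J.
Proof.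
move=> e_sym e_irr [u evu] /subsetP sub; rewrite cnbhU1.
have uJ : u \in J.
  apply: sub; rewrite in_setD1 in_cnbh1 evu orbT andbT.
  by apply: contraTneq evu => ->; rewrite e_irr.
apply/setUidPr/subsetP => y; rewrite in_cnbh1 in_cnbh.
case: eqP => [-> _|yv /= evy].
  by apply/orP; right; apply/existsP; exists u; rewrite uJ e_sym.
by rewrite sub // in_setD1 in_cnbh1 evy orbT andbT; apply/eqP.
Qed.

End ClosedNeighbourhood.

Section Configurations.
Variables (R : comPzRingType) (T : finType) (p : T -> R).

Definition config_weight (S : {set T}) : R :=
  \prod_v (if v \in S then p v else 1 - p v).

Lemma config_weightE (S : {set T}) :
  config_weight S = \prod_(v in S) p v * \prod_(v in ~: S) (1 - p v).
Proof.
rewrite /config_weight (bigID (mem S)) /=; congr (_ * _).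
  by apply: eq_bigr => v /= ->.
by apply: eq_big => v; rewrite ?in_setC // => /negbTE ->.
Qed.

Lemma prod_compl_sum_disjoint (A : {set T}) :
  \prod_(v in A) (1 - p v) = \sum_(S : {set T} | [disjoint S & A]) config_weight S.
Proof.
transitivity (\prod_v ((if v \in A then 0 else p v) + (1 - p v))).
  rewrite big_mkcond /=; apply: eq_bigr => v _.
  by case: ifP => _; rewrite ?add0r // addrC subrK.
rewrite bigA_distr [RHS]big_mkcond /=; apply: eq_big => // S _.
case: ifP => [SA|/negbT/pred0Pn[v /andP[/= vS vA]]].
  by apply: eq_bigr => v _; case: ifP => // vS; rewrite (disjointFr SA vS).
by rewrite (bigD1 v) //= vS vA mul0r.
Qed.

End Configurations.

Section InclusionExclusion.
Variables (T : finType) (e : rel T).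

Definition incl_excl_term {R : comPzRingType} (p : T -> R) (J : {set T}) : R :=
  (-1) ^+ #|J| * \prod_(v in cnbh e J) (1 - p v).

Lemma sum_sign_disjoint_cnbh (R : pzRingType) (S : {set T}) :
  symmetric e ->
  \sum_(J : {set T} | [disjoint S & cnbh e J]) (-1) ^+ #|J| =
    (if dominating e S then 1 else 0) :> R.
Proof.
move=> e_sym; case: ifP => [dom|/negbT].
  (* A vertex of a nonempty J is in S or has a neighbour in S, so N[J] meets S. *)
  rewrite (eq_bigl (pred1 set0)) => [|J /=]; first by rewrite big_pred1_eq cards0.
  apply/idP/eqP => [SJ|->]; last by rewrite cnbh0; apply/pred0P => x /=; rewrite inE andbF.
  apply/setP => x; rewrite in_set0; apply/negbTE/negP => xJ.
  case xS: (x \in S); first by move: (disjointFr SJ xS); rewrite in_cnbh xJ.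
  move/forallP: dom => /(_ x); rewrite xS /= => /existsP[y /andP[yS exy]].
  move: (disjointFr SJ yS); rewrite in_cnbh => /norP[_ /negP[]].
  by apply/existsP; exists x; rewrite xJ.
rewrite negb_forall => /existsP[x]; rewrite negb_imply => /andP[xS /existsPn nex].
(* x is neither in S nor adjacent to S, so adding x to J keeps N[J] off S. *)
apply: (@sum_toggle_eq0 _ _ _ _ x) => J xJ; last by rewrite cardsU1 xJ exprS mulN1r.
rewrite cnbhU1; apply/idP/idP => [|SJ]; first exact/disjointWr/subsetUr.
apply/pred0P => y /=; rewrite in_setU in_cnbh1.
case yS: (y \in S) => //=; rewrite (disjointFr SJ yS) orbF.
case: eqP => [yx|_]; first by rewrite -yx yS in xS.
by move: (nex y); rewrite yS e_sym => /negbTE.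
Qed.

Lemma DRel_incl_excl (R : numDomainType) (p : T -> R) :
  symmetric e -> DRel e p = \sum_(J : {set T}) incl_excl_term p J.
Proof.
move=> e_sym; rewrite /incl_excl_term.
under eq_bigr => J _ do rewrite prod_compl_sum_disjoint mulr_sumr big_mkcond /=.
rewrite exchange_big /= /DRel [LHS]big_mkcond /=; apply: eq_bigr => S _.
rewrite -big_mkcond /= -mulr_suml sum_sign_disjoint_cnbh // config_weightE.
by case: ifP; rewrite ?mul1r ?mul0r.
Qed.

Lemma sum_incl_excl_broken_eq0 (R : comPzRingType) (p : T -> R)
    (P : pred {set T}) v :
  symmetric e -> irreflexive e -> (exists u, e v u) ->
  (forall J : {set T}, v \notin J -> P (v |: J) = P J) ->
  \sum_(J | P J && (cnbh1 e v :\ v \subset J)) incl_excl_term p J = 0.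
Proof.
move=> e_sym e_irr vnoniso Pv; apply: (@sum_toggle_eq0 _ _ _ _ v) => J vJ.
  by rewrite Pv // subsetU1_notin // setD11.
move=> /andP[_ XJ]; rewrite /incl_excl_term cnbhU1_broken //.
by rewrite cardsU1 vJ exprS mulN1r mulNr.
Qed.

End InclusionExclusion.

Arguments incl_excl_term {T} e {R} p J.

Lemma exists_lt_maximal {T : finType} {lt : rel T} {W : {set T}} :
  irreflexive lt -> transitive lt -> W != set0 ->
  exists2 v, v \in W & forall w, w \in W -> ~~ lt v w.
Proof.
move=> ltirr lttr /set0Pn[w0 w0W].
pose below u := #|[set y | lt y u]|.
case: (@arg_maxnP T w0 (mem W) below w0W) => v vW vmax.
exists v => // w wW; apply/negP => ltvw.
suff: (below v < below w)%N by rewrite ltnNge (vmax w wW : (below w <= below v)%N).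
apply/proper_card/properP; split; last by exists v; rewrite !inE ?ltvw ?ltirr.
by apply/subsetP => y; rewrite !inE => ltyv; apply: lttr ltvw.
Qed.

Section BrokenNeighbourhoods.
Variables (T : finType) (e : rel T) (lt : rel T).
Hypotheses (ltirr : irreflexive lt) (lttr : transitive lt).

Lemma exists_broken_vertex_outside (XX : {set {set T}}) :
  (forall X, X \in XX -> broken_nbh e lt X) -> XX != set0 ->
  exists v, cnbh1 e v :\ v \in XX /\ forall Y, Y \in XX -> v \notin Y.
Proof.
move=> XXbroken /set0Pn[X0 X0XX].
pose W := [set w | is_max_of lt w (cnbh1 e w) && (cnbh1 e w :\ w \in XX)].
have [w0 [w0max X0E]] := XXbroken X0 X0XX.
have W0 : W != set0 by apply/set0Pn; exists w0; rewrite inE w0max -X0E X0XX.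
have [v] := exists_lt_maximal ltirr lttr W0.
rewrite inE => /andP[_ XvXX] vmax; exists v; split=> // Y YXX.
have [w [wmax YE]] := XXbroken Y YXX.
apply: contraT; rewrite negbK YE in_setD1 => /andP[vw vNw].
have /negP[] : ~~ lt v w by apply: vmax; rewrite inE wmax -YE YXX.
by move: wmax => /andP[_ /forall_inP/(_ v vNw)]; rewrite (negbTE vw).
Qed.

Lemma sum_incl_excl_avoiding_broken (R : comPzRingType) (p : T -> R)
    (XX : {set {set T}}) :
  symmetric e -> irreflexive e -> no_isolated e ->
  (forall X, X \in XX -> broken_nbh e lt X) ->
  \sum_(J : {set T} | [forall X in XX, ~~ (X \subset J)]) incl_excl_term e p J =
    \sum_J incl_excl_term e p J.
Proof.
move=> e_sym e_irr noiso; have [n] := ubnP #|XX|; elim: n XX => // n IH XX.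
rewrite ltnS => XXn XXbroken; have [->|XX0] := eqVneq XX set0.
  by apply: eq_bigl => J; apply/forall_inP => X; rewrite inE.
have [v [XvXX vout]] := exists_broken_vertex_outside _ XXbroken XX0.
set X := cnbh1 e v :\ v in XvXX *.
rewrite -(IH (XX :\ X)); first last.
- by move=> Y /setD1P[_ /XXbroken].
- by rewrite (cardsD1 X) XvXX in XXn.
rewrite [RHS](bigID (fun J : {set T} => X \subset J)) /=.
rewrite sum_incl_excl_broken_eq0 ?add0r //; last first.
  move=> J vJ; apply: eq_forallb_in => Y /setD1P[_ /vout vY].
  by rewrite subsetU1_notin.
apply: eq_bigl => J; apply/forall_inP/andP => [avoid|[/forall_inP avoid XJ] Y YXX].
  by split; [apply/forall_inP => Y /setD1P[_ /avoid]|exact: avoid].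
by case: (eqVneq Y X) => [->//|YX]; apply: avoid; rewrite in_setD1 YX.
Qed.

End BrokenNeighbourhoods.

Theorem theorem4 (R : realFieldType) (T : finType) (e : rel T) (p : T -> R) :
  simple_graph e ->
  (forall v, 0 <= p v <= 1) ->
  (DRel e p = \sum_(J : {set T}) (-1) ^+ #|J| * \prod_(v in cnbh e J) (1 - p v))
  /\
  (no_isolated e ->
   forall (lt : rel T) (XX : {set {set T}}),
     strict_linear_order lt ->
     (forall X, X \in XX -> broken_nbh e lt X) ->
     DRel e p =
       \sum_(J : {set T} | [forall X in XX, ~~ (X \subset J)])
          (-1) ^+ #|J| * \prod_(v in cnbh e J) (1 - p v)).
Proof.
move=> [e_sym e_irr] _; split; first exact: DRel_incl_excl.
move=> noiso lt XX [ltirr [lttr _]] XXbroken.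
by rewrite DRel_incl_excl // (sum_incl_excl_avoiding_broken _ _ lt ltirr lttr).
Qed.
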